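(* Let $r\in[0,1]^n$ with $r\neq 0$, let $k\in\{1,\dots,n\}$, and let $D:\{1,\dots,n\}\to(0,\infty)$ be non-increasing. Let $\sigma_r$ be a permutation ordering $r$, and define the NDCG loss of a permutation $\sigma$ by $$\mathcal L(\sigma)=\frac{\sum_{i=1}^k r(\sigma_r(i))D(i)-\sum_{i=1}^k r(\sigma(i))D(i)}{\sum_{i=1}^k r(\sigma_r(i))D(i)}.$$ Let $G(0)=0$, $G(i)=\sum_{j=1}^i D(j)$, and $f(X)=G(\min\{|X|,k\})$ for $X\subseteq V$. Then $f$ is submodular, and for every permutation $\sigma$ of $V$, $$\mathcal L(\sigma)=\frac{d_{\hat f}(r\|\sigma)}{\sum_{i=1}^k r(\sigma_r(i))D(i)}.$$
   Context: Let $V=\{1,\dots,n\}$. A permutation $\sigma$ is a bijection $V\to V$, where $\sigma(i)$ is the element placed at rank $i$. Write $S^\sigma_0=\emptyset$, $S^\sigma_j=\{\sigma(1),\dots,\sigma(j)\}$. For $f:2^V\to\mathbb{R}$ define $h^f_\sigma\in\mathbb{R}^n$ by $h^f_\sigma(\sigma(j))=f(S^\sigma_j)-f(S^\sigma_{j-1})$. For $x\in\mathbb{R}^n$, $\sigma_x$ orders $x$ if $x(\sigma_x(1))\ge\cdots\ge x(\sigma_x(n))$; the Lovász extension is $\hat f(x)=\langle x,h^f_{\sigma_x}\rangle$ (independent of the choice of $\sigma_x$). $f$ is submodular if $f(S)+f(T)\ge f(S\cup T)+f(S\cap T)$ for all $S,T$. The LB divergence is $d_{\hat f}(x\|\sigma)=\hat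 f(x)-\langle x,h^f_\sigma\rangle$ for $x\in[0,1]^n$. *)

(* V = {1..n} is rendered as 'I_n (0-indexed: rank i+1 of the
   paper is the ordinal i). Reals are a generic realFieldType R. *)
From HB Require Import structures.
From mathcomp Require Import all_boot all_order all_algebra all_fingroup.
Set Implicit Arguments. Unset Strict Implicit. Unset Printing Implicit Defensive.
Import Order.TTheory GRing.Theory Num.Theory.
Local Open Scope ring_scope.

Section Defs.
Variables (R : realFieldType) (n : nat).

Definition prefix (s : {perm 'I_n}) (j : nat) : {set 'I_n} :=
  [set s i | i : 'I_n & (i < j)%N].

(* h^f_sigma(sigma(j)) = f(S_j) - f(S_{j-1}) *)
Definition hvec (f : {set 'I_n} -> R) (s : {perm 'I_n}) (v : 'I_n) : R :=
  let j := nat_of_ord ((s^-1)%g v) in f (prefix s j.+1) - f (prefix s j).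

Definition dotp (x y : 'I_n -> R) : R := \sum_(i < n) x i * y i.

Definition ordersb (x : 'I_n -> R) (s : {perm 'I_n}) : bool :=
  [forall i : 'I_n, forall j : 'I_n, (i <= j)%N ==> (x (s j) <= x (s i))].

Definition sigma_of (x : 'I_n -> R) : {perm 'I_n} :=
  odflt 1%g [pick s : {perm 'I_n} | ordersb x s].

Definition lovasz (f : {set 'I_n} -> R) (x : 'I_n -> R) : R :=
  dotp x (hvec f (sigma_of x)).

Definition LBdiv (f : {set 'I_n} -> R) (x : 'I_n -> R) (s : {perm 'I_n}) : R :=
  lovasz f x - dotp x (hvec f s).

Definition submodular (f : {set 'I_n} -> R) : Prop :=
  forall S T : {set 'I_n}, f (S :|: T) + f (S :&: T) <= f S + f T.

Definition dcg (k : nat) (D r : 'I_n -> R) (s : {perm 'I_n}) : R :=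
  \sum_(i < n | (i < k)%N) r (s i) * D i.

Definition ndcg_loss (k : nat) (D r : 'I_n -> R) (sr s : {perm 'I_n}) : R :=
  (dcg k D r sr - dcg k D r s) / dcg k D r sr.

Definition Gsum (D : 'I_n -> R) (i : nat) : R := \sum_(j < n | (j < i)%N) D j.

Definition fNDCG (k : nat) (D : 'I_n -> R) (X : {set 'I_n}) : R :=
  Gsum D (minn #|X| k).

End Defs.

(* Write g(m) = G(min(m, k)), so that f(X) = g(|X|).  Two facts drive the proof.
   (1) Submodularity.  Any set function X |-> g(|X|) whose increments
       g(m+1) - g(m) are non-increasing is submodular: using
       |S :|: T| + |S :&: T| = |S| + |T| this reduces to the exchange inequality
       g(a+t+u) + g(a) <= g(a+t) + g(a+u), proved by induction on t.  The
       increments of our g are D(m) for m < k and 0 afterwards, which are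
       non-increasing since D is non-increasing and non-negative.
   (2) Linearity.  Since the prefix S^sigma_j has exactly j elements, the
       marginal vector h^f_sigma gives weight D(i) to rank i < k and 0 to the
       other ranks, hence <x, h^f_sigma> = DCG@k(x, sigma) for every sigma.
   The Lovász extension uses some ordering permutation of r; two permutations
   ordering r list the same values rank by rank, so it has the same DCG as
   sigma_r.  Unfolding the loss and the divergence then gives the identity. *)

From Pilot Require Import Defs.
From HB Require Import structures.
From mathcomp Require Import all_boot all_order all_algebra all_fingroup.
From mathcomp Require Import zify lra.
Set Implicit Arguments.
Unset Strict Implicit.
Import Order.TTheory GRing.Theory Num.Theory.
Local Open Scope ring_scope.

Section ConcaveCardinality.
Variables (R : realFieldType) (g : nat -> R).

Hypothesis g_concave :
  forall {m m' : nat}, (m <= m')%N -> g m'.+1 - g m' <= g m.+1 - g m.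

Lemma concave_exchange (a t u : nat) :
  g (a + t + u) + g a <= g (a + t) + g (a + u).
Proof.
elim: t => [|t IH]; first by rewrite !addn0 addrC.
have step := g_concave (leq_addr u (a + t)).
by rewrite addnS addSn; lra.
Qed.

Lemma concave_card_submodular (T : finType) (A B : {set T}) :
  g #|A :|: B| + g #|A :&: B| <= g #|A| + g #|B|.
Proof.
have hA : (#|A :&: B| <= #|A|)%N by apply/subset_leq_card/subsetIl.
have hB : (#|A :&: B| <= #|B|)%N by apply/subset_leq_card/subsetIr.
have hUI := cardsUI A B.
have -> : #|A :|: B| = (#|A :&: B| + (#|A| - #|A :&: B|) + (#|B| - #|A :&: B|))%N
  by lia.
have {2}-> : #|A| = (#|A :&: B| + (#|A| - #|A :&: B|))%N by lia.
have {2}-> : #|B| = (#|A :&: B| + (#|B| - #|A :&: B|))%N by lia.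
exact: concave_exchange.
Qed.

End ConcaveCardinality.

Section Prefixes.
Variables (R : realFieldType) (n : nat).

Lemma card_prefix (s : {perm 'I_n}) (j : nat) : (j <= n)%N -> #|Defs.prefix s j| = j.
Proof.
move=> hj.
have -> : Defs.prefix s j = [set s (widen_ord hj i) | i in 'I_j].
  apply/setP => x; apply/imsetP/imsetP => -[y hy ->].
    by rewrite inE in hy; exists (Ordinal hy) => //; congr (s _); apply: val_inj.
  by exists (widen_ord hj y); rewrite // inE /= ltn_ord.
rewrite card_imset ?card_ord // => a b /perm_inj /(congr1 val) /=; exact: val_inj.
Qed.

Lemma dotp_hvec (f : {set 'I_n} -> R) (x : 'I_n -> R) (s : {perm 'I_n}) :
  dotp x (hvec f s) =
  \sum_(i < n) x (s i) * (f (Defs.prefix s i.+1) - f (Defs.prefix s i)).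
Proof.
by rewrite /dotp (reindex_inj (@perm_inj _ s)); apply: eq_bigr => i _; rewrite /hvec permK.
Qed.

End Prefixes.

Section SortedValues.
Variables (R : realFieldType) (n : nat).

Lemma ordersP (x : 'I_n -> R) (s : {perm 'I_n}) :
  ordersb x s -> forall a b : 'I_n, (a <= b)%N -> x (s b) <= x (s a).
Proof. by move=> /forallP h a b; move: (h a) => /forallP/(_ b)/implyP. Qed.

Definition ranked_values (x : 'I_n -> R) (s : {perm 'I_n}) : seq R :=
  [seq x (s i) | i <- enum 'I_n].

Lemma ranked_values_sorted (x : 'I_n -> R) (s : {perm 'I_n}) :
  ordersb x s -> sorted >=%R (ranked_values x s).
Proof.
move=> hs; rewrite sorted_pairwise; last by move=> a b c /= hba hcb; exact: le_trans hcb hba.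
apply/(pairwiseP 0) => a b; rewrite !inE size_map size_enum_ord => ha hb hab.
rewrite !(nth_map (Ordinal ha)) -?enumT ?size_enum_ord //.
have nthE m (hm : (m < n)%N) : nth (Ordinal ha) (enum 'I_n) m = Ordinal hm.
  by apply: val_inj; rewrite /= nth_enum_ord.
by rewrite !nthE; apply: (ordersP hs (a := Ordinal ha) (b := Ordinal hb) (ltnW hab)).
Qed.

Lemma ranked_values_perm (x : 'I_n -> R) (s : {perm 'I_n}) :
  perm_eq (ranked_values x s) [seq x i | i <- enum 'I_n].
Proof.
rewrite /ranked_values (map_comp x s); apply: perm_map.
apply: uniq_perm; rewrite ?enum_uniq ?(map_inj_uniq (@perm_inj _ s)) ?enum_uniq //.
move=> y; rewrite mem_enum; apply/mapP; exists ((s^-1)%g y); rewrite ?mem_enum ?permKV //.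
Qed.

(* Two permutations ordering x place equal values at every rank: the sorted
   arrangement of a multiset is unique. *)
Lemma ordering_values_unique (x : 'I_n -> R) (s1 s2 : {perm 'I_n}) :
  ordersb x s1 -> ordersb x s2 -> forall i, x (s1 i) = x (s2 i).
Proof.
move=> h1 h2 i.
have ge_trans : transitive (>=%R : rel R) by move=> b a c /= hba hcb; exact: le_trans hcb hba.
have ge_anti : antisymmetric (>=%R : rel R) by move=> a b /= hab; apply: le_anti; rewrite andbC.
have E : ranked_values x s1 = ranked_values x s2.
  apply: (sorted_eq ge_trans ge_anti (ranked_values_sorted h1) (ranked_values_sorted h2)).
  by rewrite (perm_trans (ranked_values_perm x s1)) // perm_sym ranked_values_perm.
have := congr1 (nth 0 ^~ i) E.
by rewrite /ranked_values !(nth_map i) -?enumT ?size_enum_ord // nth_ord_enum.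
Qed.

Lemma sigma_of_orders (x : 'I_n -> R) (s : {perm 'I_n}) :
  ordersb x s -> ordersb x (sigma_of x).
Proof. by move=> hs; rewrite /sigma_of; case: pickP => [s' -> // | /(_ s)]; rewrite hs. Qed.

End SortedValues.

Section NDCG.
Variables (R : realFieldType) (n k : nat) (D : 'I_n -> R).

Definition truncG (m : nat) : R := Gsum D (minn m k).

Definition truncG_incr (m : nat) : R :=
  \sum_(j < n | (j == m :> nat) && (m < k)%N) D j.

Lemma truncG_step (m : nat) : truncG m.+1 - truncG m = truncG_incr m.
Proof.
rewrite /truncG /Gsum (bigID (fun j : 'I_n => j == m :> nat)) /=.
rewrite [X in _ + X - _](eq_bigl (fun j : 'I_n => (j < minn m k)%N)) ?addrK.
  by apply: eq_bigl => j; apply/idP/idP; lia.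
by move=> j; apply/idP/idP; lia.
Qed.

Lemma truncG_incr_ord (i : 'I_n) : truncG_incr i = if (i < k)%N then D i else 0.
Proof.
rewrite /truncG_incr; case: ifP => hik.
  by rewrite (eq_bigl (pred1 i)) ?big_pred1_eq // => j; rewrite andbT.
by rewrite big_pred0 // => j; rewrite andbF.
Qed.

Hypothesis D_ge0 : forall i, 0 <= D i.
Hypothesis D_noninc : forall i j : 'I_n, (i <= j)%N -> D j <= D i.
Hypothesis k_le_n : (k <= n)%N.

Lemma truncG_concave (m m' : nat) :
  (m <= m')%N -> truncG m'.+1 - truncG m' <= truncG m.+1 - truncG m.
Proof.
move=> hm; rewrite !truncG_step; case: (ltnP m' k) => hm'k.
  have hm'n : (m' < n)%N := leq_trans hm'k k_le_n.
  have hmn : (m < n)%N := leq_ltn_trans hm hm'n.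
  rewrite -[m']/(nat_of_ord (Ordinal hm'n)) -[m]/(nat_of_ord (Ordinal hmn)).
  by rewrite !truncG_incr_ord /= hm'k (leq_ltn_trans hm hm'k); apply: D_noninc.
rewrite {1}/truncG_incr big_pred0; last by move=> j; rewrite ltnNge hm'k andbF.
exact: sumr_ge0.
Qed.

Lemma fNDCG_submodular : submodular (fNDCG k D).
Proof. by move=> S T; apply: (concave_card_submodular truncG_concave). Qed.

Lemma dotp_hvec_fNDCG (x : 'I_n -> R) (s : {perm 'I_n}) :
  dotp x (hvec (fNDCG k D) s) = dcg k D x s.
Proof.
rewrite dotp_hvec /dcg [RHS]big_mkcond; apply: eq_bigr => i _.
rewrite /fNDCG !card_prefix ?(ltnW (ltn_ord i)) // -/(truncG _) -/(truncG _).
by rewrite truncG_step truncG_incr_ord; case: ifP; rewrite ?mulr0.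
Qed.

Lemma dcg_ordering_invariant (x : 'I_n -> R) (s1 s2 : {perm 'I_n}) :
  ordersb x s1 -> ordersb x s2 -> dcg k D x s1 = dcg k D x s2.
Proof.
by move=> h1 h2; apply: eq_bigr => i _; rewrite (ordering_values_unique h1 h2).
Qed.

End NDCG.

Theorem mainTheorem11 (R : realFieldType) (n : nat) (r : 'I_n -> R) (k : nat)
  (D : 'I_n -> R) (sr : {perm 'I_n}) :
  (forall i, 0 <= r i <= 1) ->
  ~ (forall i, r i = 0) ->
  (1 <= k <= n)%N ->
  (forall i, 0 < D i) ->
  (forall i j : 'I_n, (i <= j)%N -> D j <= D i) ->
  ordersb r sr ->
  submodular (fNDCG k D) /\
  (forall s : {perm 'I_n},
     ndcg_loss k D r sr s = LBdiv (fNDCG k D) r s / dcg k D r sr).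
Proof.
move=> _ _ /andP[_ k_le_n] D_pos D_noninc r_sorted.
split; first exact: fNDCG_submodular (fun i => ltW (D_pos i)) D_noninc k_le_n.
move=> s; rewrite /ndcg_loss /LBdiv /lovasz !dotp_hvec_fNDCG.
by rewrite (dcg_ordering_invariant k D (sigma_of_orders r_sorted) r_sorted).
Qed.
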